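(* Let $2\le d\le m$ and $\delta>0$. Let $A$ be a deterministic priority mechanism that processes elementary bids and is truthful without money and with verification for CAs with known multi-minded bidders. Then there is an instance with $m$ goods in which all demanded sets have cardinality at most $d$ on which the social welfare of $A$ is less than $\mathrm{OPT}/((1-\delta)d)$; i.e., the approximation ratio of $A$ is greater than $(1-\delta)d$.
   Context: Combinatorial auction with a set $\mathsf U$ of $m$ goods (single copy each) and bidders; bidder $i$ has a public collection $\mathcal S_i$ of nonempty subsets of $\mathsf U$ (known bidders) and a private valuation $v_i:\mathcal S_i\to\mathbb R_{\ge0}$. Truthfulness without money and with verification (known bidders) means: for all $i$, $\mathbf b_{-i}$, true $v_i$ and declarations $b_i$ with $b_i(A_i(b_i,\mathbf b_{-i}))\le v_i(A_i(b_i,\mathbf b_{-i}))$, $v_i(A_i(v_i,\mathbf b_{-i}))\ge v_i(A_i(b_i,\mathbf b_{-i}))$. Priority mechanism processing elementary bids: the input is a finite set $I$ of elementary bids $(i,S,v)$ (bidder $i$ declares value $v$ for demanded set $S$), drawn from the class $\mathcal I$ of all possible elementary bids. The mechanism proceeds in rounds; in each round, without looking at the unprocessed items, it chooses a total order on $\mathcal I$ (which may depend on the items processed and decisions taken so far), receives the first unprocessed item of $I$ in this order, and makes an irrevocable accept/reject decision on it; accepting $(i,S,v)$ allocates $S$ to $i$ and yields welfare $v$. The output must be a feasible allocation (each bidder gets at most one set, sets pairwise disjoint). $\mathrm{OPT}$ is the maximum welfare of a feasible allocation. *)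

From HB Require Import structures.
From mathcomp Require Import all_boot all_order all_algebra.
Set Implicit Arguments. Unset Strict Implicit. Unset Printing Implicit Defensive.
Import Order.TTheory GRing.Theory Num.Theory.
Local Open Scope ring_scope.

Section Auction.
Variables (m : nat) (R : realFieldType).

Definition bid := (nat * {set 'I_m} * R)%type.
Definition bid_bidder (x : bid) : nat := x.1.1.
Definition bid_set (x : bid) : {set 'I_m} := x.1.2.
Definition bid_value (x : bid) : R := x.2.

Definition valid_bid (x : bid) : bool := (bid_set x != set0) && (0 <= bid_value x).

(* history = items processed so far, with the decisions taken *)
Definition history := seq (bid * bool).

(* A deterministic priority mechanism: in each round the order on I depends
   only on the history; the accept/reject decision on the received item
   depends on the history and on that item. *)
Record prio_mech := PrioMech {
  pm_ord : history -> rel bid;       (* pm_ord h x y : x has priority over y *)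
  pm_dec : history -> bid -> bool    (* true = accept *)
}.

Definition strict_total_order (r : rel bid) : Prop :=
  [/\ (forall x, valid_bid x -> ~~ r x x),
      (forall x y z, valid_bid x -> valid_bid y -> valid_bid z ->
                     r x y -> r y z -> r x z)
    & (forall x y, valid_bid x -> valid_bid y -> x != y -> r x y || r y x)].

Definition priority_mechanism (M : prio_mech) : Prop :=
  forall h : history, strict_total_order (pm_ord M h).

Definition pickmin (r : rel bid) (s : seq bid) : option bid :=
  foldr (fun x acc => match acc with
                      | None => Some x
                      | Some y => if r x y then Some x else Some y
                      end) None s.

Fixpoint run_aux (M : prio_mech) (fuel : nat) (h : history) (rest : seq bid)
  : history :=
  match fuel with
  | 0 => h
  | k.+1 =>
    match pickmin (pm_ord M h) rest with
    | None => h
    | Some x => run_aux M k (rcons h (x, pm_dec M h x)) (rem x rest)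
    end
  end.

Definition run (M : prio_mech) (I : seq bid) : history := run_aux M (size I) [::] I.

Definition accepted (M : prio_mech) (I : seq bid) : seq bid :=
  [seq p.1 | p <- run M I & p.2].

Definition alloc (M : prio_mech) (I : seq bid) (i : nat) : option {set 'I_m} :=
  match [seq x <- accepted M I | bid_bidder x == i] with
  | x :: _ => Some (bid_set x)
  | [::] => None
  end.

Definition mech_welfare (M : prio_mech) (I : seq bid) : R :=
  \sum_(x <- accepted M I) bid_value x.

Definition optval (f : {set 'I_m} -> R) (o : option {set 'I_m}) : R :=
  if o is Some A then f A else 0.

(* Instances with known multi-minded bidders 0..n-1: coll i is the public
   collection S_i, a profile b assigns bidder i a valuation on S_i. *)
Definition known_coll (n : nat) (coll : 'I_n -> {set {set 'I_m}}) : Prop :=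
  forall i S, S \in coll i -> S != set0.

Definition nonneg_profile (n : nat) (coll : 'I_n -> {set {set 'I_m}})
  (b : 'I_n -> {set 'I_m} -> R) : Prop :=
  forall i S, S \in coll i -> 0 <= b i S.

Definition bids_of (n : nat) (coll : 'I_n -> {set {set 'I_m}})
  (b : 'I_n -> {set 'I_m} -> R) : seq bid :=
  [seq ((nat_of_ord i, A), b i A) | i <- enum 'I_n, A <- enum (coll i)].

Definition feasible_output (M : prio_mech) : Prop :=
  forall n (coll : 'I_n -> {set {set 'I_m}}) (b : 'I_n -> {set 'I_m} -> R),
    known_coll coll -> nonneg_profile coll b ->
    let acc := accepted M (bids_of coll b) in
    uniq [seq bid_bidder x | x <- acc] /\
    pairwise (fun x y => [disjoint bid_set x & bid_set y]) acc.

Definition truthful_verif (M : prio_mech) : Prop :=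
  forall n (coll : 'I_n -> {set {set 'I_m}}) (b : 'I_n -> {set 'I_m} -> R)
         (i : 'I_n) (v : {set 'I_m} -> R),
    known_coll coll -> nonneg_profile coll b ->
    (forall S, S \in coll i -> 0 <= v S) ->
    let bv := fun j => if j == i then v else b j in
    let Ab := alloc M (bids_of coll b) i in
    optval (b i) Ab <= optval v Ab ->
    optval v Ab <= optval v (alloc M (bids_of coll bv) i).

Definition feasible_alloc (n : nat) (coll : 'I_n -> {set {set 'I_m}})
  (X : {ffun 'I_n -> option {set 'I_m}}) : bool :=
  [forall i, if X i is Some A then A \in coll i else true] &&
  [forall i, forall j, (i != j) ==>
     (if X i is Some A then (if X j is Some B then [disjoint A & B] else true)
      else true)].

Definition alloc_welfare (n : nat) (v : 'I_n -> {set 'I_m} -> R)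
  (X : {ffun 'I_n -> option {set 'I_m}}) : R :=
  \sum_(i < n) optval (v i) (X i).

Definition OPT (n : nat) (coll : 'I_n -> {set {set 'I_m}})
  (v : 'I_n -> {set 'I_m} -> R) : R :=
  \big[Num.max/0]_(X : {ffun 'I_n -> option {set 'I_m}} | feasible_alloc coll X)
     alloc_welfare v X.

End Auction.

From HB Require Import structures.
From mathcomp Require Import all_boot all_order all_algebra.
From mathcomp Require Import lra.
From Stdlib Require Import Classical.
Set Implicit Arguments. Unset Strict Implicit. Unset Printing Implicit Defensive.
Import Order.TTheory GRing.Theory Num.Theory.
Local Open Scope ring_scope.

(* Assume, for a contradiction, that M is rho-approximate, rho := (1 - delta) d,
   on every instance whose demanded sets have at most d goods.  Everything is
   decided in the very first round, whose priority order is a fixed order on all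
   elementary bids (the history is empty).
   1. A lone bid with positive value must be accepted: rejecting it yields
      welfare 0 against a positive optimum.
   2. For one bidder j and a set U, the bid (j, U, 1) precedes every bid
      (j, T, W) with T <> U and 0 < W < 1.  Declaring U at 1 and T at a tiny
      eps wins U (winning T would earn only eps, too little); by truthfulness
      the true type (1 on U, W on T) must then also win value 1, but if
      (j, T, W) came first it would win T, worth W < 1.
   3. Take U = the first d goods and d bidders, bidder j demanding U (value 1)
      or the single good j (value W = 1/(1+delta)).  By 2 some bid on U comes
      first, is accepted by 1, and blocks every other bid: the welfare is 1
      whereas OPT >= d W > (1 - delta) d. *)

Section Execution.
Variables (m : nat) (R : realFieldType).
Implicit Types (r : rel (bid m R)) (s : seq (bid m R)).

Lemma pickmin_cons r x s :
  pickmin r (x :: s) = match pickmin r s with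
    | None => Some x | Some y => if r x y then Some x else Some y end.
Proof. by []. Qed.

Lemma pickmin_nil r s : pickmin r s = None -> s = [::].
Proof. by case: s => // x s; rewrite pickmin_cons; case: pickmin => // y; case: ifP. Qed.

Lemma pickmin_exists r s x : x \in s -> exists y, pickmin r s = Some y.
Proof.
move=> hs; case E: (pickmin r s) => [y|]; first by exists y.
by move: hs; rewrite (pickmin_nil E).
Qed.

Lemma pickmin_mem r s y : pickmin r s = Some y -> y \in s.
Proof.
elim: s y => [|x s IH] y //; rewrite pickmin_cons.
case E: (pickmin r s) => [z|]; last by case=> <-; rewrite mem_head.
case: ifP => _ [<-]; first by rewrite mem_head.
by rewrite in_cons (IH _ E) orbT.
Qed.

Lemma pickmin_minimal r s y :
  strict_total_order r -> all (@valid_bid m R) s -> pickmin r s = Some y ->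
  forall z, z \in s -> ~~ r z y.
Proof.
case=> irr tr _; elim: s y => [|x s IH] y // /andP[vx vs]; rewrite pickmin_cons.
case E: (pickmin r s) => [w|]; last first.
  by rewrite (pickmin_nil E) => -[<-] z; rewrite inE => /eqP ->; apply: irr.
have vw : valid_bid w := allP vs w (pickmin_mem E).
case: ifP => rxw [<-] z; rewrite in_cons => /orP[/eqP->|zs].
- exact: irr.
- apply/negP => rzx; have vz := allP vs z zs.
  by move: (IH w vs E z zs); rewrite (tr z x w vz vx vw rzx rxw).
- by rewrite rxw.
- exact: IH w vs E z zs.
Qed.

Lemma strict_total_swap r x y :
  strict_total_order r -> valid_bid x -> valid_bid y -> x != y -> ~~ r x y -> r y x.
Proof. by case=> _ _ total vx vy xy; have := total x y vx vy xy; case: (r x y). Qed.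

Lemma run_aux_extends (M : prio_mech m R) f h s :
  exists t, run_aux M f h s = h ++ t /\ all (fun p => p.1 \in s) t.
Proof.
elim: f h s => [|f IH] h s /=; first by exists [::]; rewrite cats0.
case E: (pickmin _ _) => [x|]; last by exists [::]; rewrite cats0.
have [t [-> Ht]] := IH (rcons h (x, pm_dec M h x)) (rem x s).
exists ((x, pm_dec M h x) :: t); split; first by rewrite cat_rcons.
rewrite /= (pickmin_mem E) /=; apply/allP => p pt.
exact: mem_rem (allP Ht p pt).
Qed.

Lemma run_aux_step (M : prio_mech m R) f h s :
  run_aux M f.+1 h s = match pickmin (pm_ord M h) s with
    | None => h
    | Some x => run_aux M f (rcons h (x, pm_dec M h x)) (rem x s) end.
Proof. by []. Qed.

Lemma accepted_first (M : prio_mech m R) s x :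
  pickmin (pm_ord M [::]) s = Some x ->
  exists acc, accepted M s = (if pm_dec M [::] x then x :: acc else acc)
              /\ {subset acc <= rem x s}.
Proof.
case: s => [|y s] E //; rewrite /accepted /run [size _]/= run_aux_step E.
have [t [-> Ht]] := run_aux_extends M (size s) [:: (x, pm_dec M [::] x)] (rem x (y :: s)).
exists [seq p.1 | p <- t & p.2]; split; first by case: pm_dec.
by move=> z /mapP[p]; rewrite mem_filter => /andP[_ pt] ->; exact: allP Ht p pt.
Qed.

End Execution.

Section Instances.
Variables (m : nat) (R : realFieldType).
Implicit Types (M : prio_mech m R) (n : nat).

Definition d_bounded n (coll : 'I_n -> {set {set 'I_m}}) (d : nat) : Prop :=
  forall i S, S \in coll i -> (#|S| <= d)%N.

Definition pos_profile n (coll : 'I_n -> {set {set 'I_m}})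
  (b : 'I_n -> {set 'I_m} -> R) : Prop :=
  forall i S, S \in coll i -> 0 < b i S.

Lemma pos_profile_nonneg n (coll : 'I_n -> {set {set 'I_m}}) (b : 'I_n -> {set 'I_m} -> R) :
  pos_profile coll b -> nonneg_profile coll b.
Proof. by move=> pos i S /pos/ltW. Qed.

Lemma mem_bids_of n (coll : 'I_n -> {set {set 'I_m}}) (b : 'I_n -> {set 'I_m} -> R) z :
  z \in bids_of coll b -> exists i A, A \in coll i /\ z = ((nat_of_ord i, A), b i A).
Proof. by move/allpairsPdep => [i [A [_ HA ->]]]; exists i, A; rewrite mem_enum in HA. Qed.

Lemma bids_of_mem n (coll : 'I_n -> {set {set 'I_m}}) (b : 'I_n -> {set 'I_m} -> R) i A :
  A \in coll i -> ((nat_of_ord i, A), b i A) \in bids_of coll b.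
Proof. by move=> HA; apply/allpairsPdep; exists i, A; rewrite !mem_enum. Qed.

Lemma uniq_bids_of n (coll : 'I_n -> {set {set 'I_m}}) (b : 'I_n -> {set 'I_m} -> R) : uniq (bids_of coll b).
Proof.
apply: allpairs_uniq_dep => [|i _|]; rewrite ?enum_uniq //.
by move=> [i A] [j B] _ _ /= [/val_inj -> ->].
Qed.

Lemma valid_bids_of n (coll : 'I_n -> {set {set 'I_m}}) (b : 'I_n -> {set 'I_m} -> R) :
  known_coll coll -> nonneg_profile coll b -> all (@valid_bid m R) (bids_of coll b).
Proof.
move=> kc nn; apply/allP => z /mem_bids_of [i [A [HA ->]]].
by rewrite /valid_bid /bid_set /bid_value /= (kc i A HA) (nn i A HA).
Qed.

Lemma OPT_ge n (coll : 'I_n -> {set {set 'I_m}}) (v : 'I_n -> {set 'I_m} -> R) X :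
  feasible_alloc coll X -> alloc_welfare v X <= OPT coll v.
Proof. by move=> fX; rewrite /OPT (bigD1 X) //= le_max lexx. Qed.

(* Giving each bidder j its own good e j is feasible. *)
Lemma OPT_singletons n (coll : 'I_n -> {set {set 'I_m}}) (v : 'I_n -> {set 'I_m} -> R)
  (e : 'I_n -> 'I_m) (W : R) :
  injective e -> (forall j, [set e j] \in coll j) -> (forall j, v j [set e j] = W) ->
  n%:R * W <= OPT coll v.
Proof.
move=> e_inj e_in vW; pose X := [ffun j => Some [set e j]].
have fX : feasible_alloc coll X.
  apply/andP; split; first by apply/forallP => j; rewrite ffunE e_in.
  apply/forallP => j; apply/forallP => k; apply/implyP => jk.
  by rewrite !ffunE disjoints1 in_set1; apply: contra jk => /eqP /e_inj ->.
apply: le_trans (OPT_ge v fX); rewrite /alloc_welfare (eq_bigr (fun _ => W)).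
  by rewrite sumr_const card_ord mulr_natl.
by move=> j _; rewrite ffunE /= vW.
Qed.

Lemma accepted_alone M n (coll : 'I_n -> {set {set 'I_m}}) (b : 'I_n -> {set 'I_m} -> R) y :
  feasible_output M -> known_coll coll -> nonneg_profile coll b ->
  pickmin (pm_ord M [::]) (bids_of coll b) = Some y -> pm_dec M [::] y ->
  (forall z, z \in bids_of coll b -> z != y ->
     (bid_bidder z == bid_bidder y) || ~~ [disjoint bid_set y & bid_set z]) ->
  accepted M (bids_of coll b) = [:: y].
Proof.
move=> feas kc nn y_first dy conflict.
have [acc [Eacc sub]] := accepted_first y_first; rewrite dy in Eacc.
have [uniq_bidders disj] := feas n coll b kc nn; rewrite Eacc in uniq_bidders disj *.
case: acc Eacc sub uniq_bidders disj => [|z acc] // _ sub.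
have := sub z (mem_head _ _); rewrite mem_rem_uniq ?uniq_bids_of // => /andP[zy zI].
case/orP: (conflict z zI zy) => [/eqP same|overlap] /=.
- by rewrite in_cons same eqxx.
- by rewrite (negbTE overlap).
Qed.

Lemma alloc_alone M (I : seq (bid m R)) y :
  accepted M I = [:: y] -> alloc M I (bid_bidder y) = Some (bid_set y).
Proof. by move=> acc; rewrite /alloc acc /= eqxx. Qed.

Definition pair_coll n (j : 'I_n) (A B : {set 'I_m}) : 'I_n -> {set {set 'I_m}} :=
  fun i => if i == j then [set A; B] else set0.

Section Pair.
Variables (n : nat) (j : 'I_n) (A B : {set 'I_m}).
Implicit Types b v : 'I_n -> {set 'I_m} -> R.

Lemma mem_pair_coll i S : S \in pair_coll j A B i -> i = j /\ (S = A \/ S = B).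
Proof.
rewrite /pair_coll; case: eqP => [->|]; last by rewrite inE.
by rewrite !inE => /orP[] /eqP ->; auto.
Qed.

Lemma mem_pair_bids b z :
  z \in bids_of (pair_coll j A B) b ->
  z = ((nat_of_ord j, A), b j A) \/ z = ((nat_of_ord j, B), b j B).
Proof. by move/mem_bids_of => [i [S [/mem_pair_coll [-> [] -> ->]]]]; [left|right]. Qed.

Lemma pair_bidA b : ((nat_of_ord j, A), b j A) \in bids_of (pair_coll j A B) b.
Proof. by apply: bids_of_mem; rewrite /pair_coll eqxx set21. Qed.

Lemma pair_bidB b : ((nat_of_ord j, B), b j B) \in bids_of (pair_coll j A B) b.
Proof. by apply: bids_of_mem; rewrite /pair_coll eqxx set22. Qed.

Lemma known_pair : A != set0 -> B != set0 -> known_coll (pair_coll j A B).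
Proof. by move=> hA hB i S /mem_pair_coll [_ [] ->]. Qed.

Lemma pos_pair b : 0 < b j A -> 0 < b j B -> pos_profile (pair_coll j A B) b.
Proof. by move=> hA hB i S /mem_pair_coll [-> [] ->]. Qed.

Lemma bounded_pair d : (#|A| <= d)%N -> (#|B| <= d)%N -> d_bounded (pair_coll j A B) d.
Proof. by move=> hA hB i S /mem_pair_coll [_ [] ->]. Qed.

(* Giving A to j alone is feasible. *)
Lemma OPT_pair v : v j A <= OPT (pair_coll j A B) v.
Proof.
pose X := [ffun i : 'I_n => if i == j then Some A else None].
have fX : feasible_alloc (pair_coll j A B) X.
  apply/andP; split.
    by apply/forallP => i; rewrite ffunE /pair_coll; case: eqP => // _; rewrite set21.
  apply/forallP => i; apply/forallP => k; apply/implyP => nik.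
  rewrite !ffunE; case: eqP => [Ei|//]; case: eqP => [Ek|//].
  by move: nik; rewrite Ei Ek eqxx.
apply: le_trans (OPT_ge v fX); rewrite /alloc_welfare (bigD1 j) //= ffunE eqxx.
by rewrite big1 ?addr0 // => i /negbTE; rewrite ffunE => ->.
Qed.

End Pair.
End Instances.

Definition approximates m (R : realFieldType) (M : prio_mech m R) (d : nat) (rho : R)
  : Prop :=
  forall n (coll : 'I_n -> {set {set 'I_m}}) (v : 'I_n -> {set 'I_m} -> R),
    known_coll coll -> d_bounded coll d -> nonneg_profile coll v ->
    OPT coll v <= rho * mech_welfare M (bids_of coll v).

Section LowerBound.
Variables (m d : nat) (R : realFieldType) (M : prio_mech m R) (rho : R).
Hypotheses (prio : priority_mechanism M) (feas : feasible_output M)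
  (truth : truthful_verif M) (approx : approximates M d rho).

Lemma accept_lone n (j : 'I_n) S a :
  S != set0 -> (#|S| <= d)%N -> 0 < a -> pm_dec M [::] ((nat_of_ord j, S), a).
Proof.
move=> S0 Sd a0; pose v := fun (_ : 'I_n) (_ : {set 'I_m}) => a.
have pos : pos_profile (pair_coll j S S) v by apply: pos_pair.
have nn := pos_profile_nonneg pos.
have [y y_first] := pickmin_exists (pm_ord M [::]) (pair_bidA j S S v).
have y_eq : y = ((nat_of_ord j, S), a) by case: (mem_pair_bids (pickmin_mem y_first)).
subst y; case dec: (pm_dec M [::] _) => //.
have [acc [Eacc sub]] := accepted_first y_first; rewrite dec in Eacc.
have acc0 : acc = [::].
  case: acc {Eacc} sub => // z acc /(_ z (mem_head _ _)) zr.
  by case: (mem_pair_bids (mem_rem zr)) => ez; move: zr; rewrite ez mem_rem_uniqF ?uniq_bids_of.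
have := approx (known_pair (j:=j) S0 S0) (bounded_pair (j:=j) Sd Sd) nn.
rewrite /mech_welfare Eacc acc0 big_nil mulr0 => OPT0.
by have := le_trans (OPT_pair j S S v) OPT0; rewrite leNgt a0.
Qed.

Lemma first_alone n (coll : 'I_n -> {set {set 'I_m}}) (b : 'I_n -> {set 'I_m} -> R) y :
  known_coll coll -> d_bounded coll d -> pos_profile coll b ->
  pickmin (pm_ord M [::]) (bids_of coll b) = Some y ->
  (forall z, z \in bids_of coll b -> z != y ->
     (bid_bidder z == bid_bidder y) || ~~ [disjoint bid_set y & bid_set z]) ->
  accepted M (bids_of coll b) = [:: y].
Proof.
move=> kc bd pos y_first conflict.
apply: (accepted_alone feas kc (pos_profile_nonneg pos) y_first _ conflict).
have [i [S [HS ->]]] := mem_bids_of (pickmin_mem y_first).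
by apply: accept_lone; [apply: kc HS | apply: bd HS | apply: pos HS].
Qed.

Lemma pair_first n (j : 'I_n) A B (b : 'I_n -> {set 'I_m} -> R) :
  A != set0 -> B != set0 -> (#|A| <= d)%N -> (#|B| <= d)%N ->
  0 < b j A -> 0 < b j B ->
  exists2 y, pickmin (pm_ord M [::]) (bids_of (pair_coll j A B) b) = Some y
    & accepted M (bids_of (pair_coll j A B) b) = [:: y].
Proof.
move=> A0 B0 Ad Bd bA bB.
have [y y_first] := pickmin_exists (pm_ord M [::]) (pair_bidA j A B b).
exists y => //; apply: (first_alone (known_pair A0 B0) (bounded_pair Ad Bd)
  (pos_pair bA bB) y_first) => z /mem_pair_bids + _.
by case: (mem_pair_bids (pickmin_mem y_first)) => -> [] ->; rewrite eqxx.
Qed.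

Lemma pair_alloc_preferred n (j : 'I_n) A B (b : 'I_n -> {set 'I_m} -> R) :
  A != set0 -> B != set0 -> (#|A| <= d)%N -> (#|B| <= d)%N ->
  0 < b j A -> 0 < b j B ->
  pm_ord M [::] ((nat_of_ord j, B), b j B) ((nat_of_ord j, A), b j A) ->
  alloc M (bids_of (pair_coll j A B) b) j = Some B.
Proof.
move=> A0 B0 Ad Bd bA bB B_before_A.
have [y y_first acc] := pair_first A0 B0 Ad Bd bA bB.
suff y_B : y = ((nat_of_ord j, B), b j B) by have := alloc_alone acc; rewrite y_B.
case: (mem_pair_bids (pickmin_mem y_first)) => // y_A.
have := pickmin_minimal (prio [::])
  (valid_bids_of (known_pair A0 B0) (pos_profile_nonneg (pos_pair bA bB)))
  y_first (pair_bidB j A B b).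
by rewrite y_A B_before_A.
Qed.

(* Step 2a: declaring 1 on U and the tiny value 1/(d+1) on T wins U, since
   winning T would earn less than a 1/rho fraction of OPT >= 1. *)
Lemma tiny_alternative_loses n (j : 'I_n) (U T : {set 'I_m}) (b : 'I_n -> {set 'I_m} -> R) :
  rho < d%:R -> U != set0 -> T != set0 -> (#|U| <= d)%N -> (#|T| <= d)%N ->
  b j U = 1 -> b j T = (d%:R + 1)^-1 ->
  alloc M (bids_of (pair_coll j U T) b) j = Some U.
Proof.
move=> rho_lt U0 T0 Ud Td bU bT.
have d1_gt0 : 0 < d%:R + 1 :> R by have := ler0n R d; lra.
have rho_eps : rho * b j T < 1.
  by rewrite bT -[_ * _^-1]/(_ / _) ltr_pdivrMr // mul1r; lra.
have bU_pos : 0 < b j U by rewrite bU ltr01.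
have bT_pos : 0 < b j T by rewrite bT invr_gt0.
have [y y_first acc] := pair_first U0 T0 Ud Td bU_pos bT_pos.
case: (mem_pair_bids (pickmin_mem y_first)) => y_eq.
  by have := alloc_alone acc; rewrite y_eq.
have := approx (known_pair U0 T0) (bounded_pair Ud Td)
  (pos_profile_nonneg (pos_pair bU_pos bT_pos)).
rewrite /mech_welfare acc big_seq1 y_eq /bid_value /=.
by move/(le_trans (OPT_pair j U T b)); rewrite bU leNgt rho_eps.
Qed.

(* Step 2b: in the first round, a bidder's bid of value 1 on U has priority
   over any of its bids on another set T of value W < 1: otherwise the type
   (1 on U, W on T) would gain by declaring 1/(d+1) instead of W on T. *)
Lemma first_round_prefers n (j : 'I_n) (U T : {set 'I_m}) (W : R) :
  rho < d%:R -> U != set0 -> T != set0 -> (#|U| <= d)%N -> (#|T| <= d)%N ->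
  T != U -> 0 < W -> W < 1 ->
  pm_ord M [::] ((nat_of_ord j, U), 1) ((nat_of_ord j, T), W).
Proof.
move=> rho_lt U0 T0 Ud Td TU W0 W1.
pose declared (c : R) := fun (_ : 'I_n) (A : {set 'I_m}) => if A == U then 1 else c.
have declared_pos (c : R) : 0 < c -> pos_profile (pair_coll j U T) (declared c).
  by move=> c0; apply: pos_pair; rewrite /declared ?eqxx ?(negbTE TU) ?ltr01.
have d1_gt0 : 0 < d%:R + 1 :> R by have := ler0n R d; lra.
pose b := declared (d%:R + 1)^-1; pose v := declared W j.
have b_pos : pos_profile (pair_coll j U T) b by apply: declared_pos; rewrite invr_gt0.
have v_nn S : S \in pair_coll j U T j -> 0 <= v S.
  by move=> /(declared_pos W W0 j) /ltW.
have win_U : alloc M (bids_of (pair_coll j U T) b) j = Some U.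
  by apply: tiny_alternative_loses; rewrite // /b /declared ?eqxx ?(negbTE TU).
have := truth (known_pair U0 T0) (pos_profile_nonneg b_pos) v_nn.
rewrite /= win_U /= /b /v /declared eqxx => /(_ (lexx _)).
set bv := (fun k : 'I_n => _) => v_wins.
have [//|not_pref] := boolP (pm_ord M [::] ((nat_of_ord j, U), 1) ((nat_of_ord j, T), W)).
have T_first : pm_ord M [::] ((nat_of_ord j, T), W) ((nat_of_ord j, U), 1).
  apply: (strict_total_swap (prio [::])) not_pref.
  - by rewrite /valid_bid /= U0 ler01.
  - by rewrite /valid_bid /= T0 ltW.
  - by apply/eqP => -[] /esym/eqP; rewrite (negbTE TU).
have bvU : bv j U = 1 by rewrite /bv eqxx /declared eqxx.
have bvT : bv j T = W by rewrite /bv eqxx /declared (negbTE TU).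
have bvU_pos : 0 < bv j U by rewrite bvU ltr01.
have bvT_pos : 0 < bv j T by rewrite bvT.
have := pair_alloc_preferred U0 T0 Ud Td bvU_pos bvT_pos.
rewrite bvU bvT => /(_ T_first) win_T.
by move: v_wins; rewrite win_T /= /declared (negbTE TU) leNgt W1.
Qed.

(* Step 3: with U the first d goods, bidder j (for j < d) demands U at value 1
   or the single good j at value W.  A bid on U comes first and blocks all the
   others, so the welfare is 1 while OPT >= d W. *)
Lemma welfare_ratio_bound (W : R) :
  (2 <= d)%N -> (d <= m)%N -> rho < d%:R -> 0 < W -> W < 1 -> d%:R * W <= rho.
Proof.
move=> d2 dm rho_lt W0 W1.
have d0 : (0 < d)%N by apply: ltn_trans d2.
pose e := fun j : 'I_d => widen_ord dm j.
have e_inj : injective e by move=> a b /(congr1 val) ab; apply: val_inj.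
pose U := [set e j | j : 'I_d].
have U_card : #|U| = d by rewrite card_imset // card_ord.
have U0 : U != set0 by rewrite -card_gt0 U_card.
have single0 j : [set e j] != set0 by rewrite -card_gt0 cards1.
have single_neq j : [set e j] != U.
  by apply/eqP => E; move: U_card d2; rewrite -E cards1 => <-.
pose c := fun j : 'I_d => [set U; [set e j]].
pose v := fun (_ : 'I_d) (A : {set 'I_m}) => if A == U then 1 else W.
have U_in j : U \in c j by rewrite !inE eqxx.
have kc : known_coll c by move=> i S; rewrite !inE => /orP[] /eqP ->.
have bd : d_bounded c d by move=> i S; rewrite !inE => /orP[] /eqP ->; rewrite ?U_card ?cards1.
have pos : pos_profile c v by move=> i S _; rewrite /v; case: ifP => _; rewrite ?ltr01.
have [y y_first] := pickmin_exists (pm_ord M [::]) (bids_of_mem v (U_in (Ordinal d0))).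
have [i [A [HA y_eq]]] := mem_bids_of (pickmin_mem y_first).
have A_U : A = U.
  move: HA; rewrite !inE => /orP[/eqP //|/eqP A_single].
  have := pickmin_minimal (prio [::]) (valid_bids_of kc (pos_profile_nonneg pos))
    y_first (bids_of_mem v (U_in i)).
  rewrite y_eq A_single /v eqxx (negbTE (single_neq i)).
  by rewrite (first_round_prefers i rho_lt U0 (single0 i) _ _ (single_neq i) W0 W1)
    ?U_card ?cards1.
have acc : accepted M (bids_of c v) = [:: y].
  apply: (first_alone kc bd pos y_first) => z /mem_bids_of [k [S [HS ->]]] _.
  rewrite y_eq A_U /bid_set /=; move: HS; rewrite !inE => /orP[] /eqP ->.
    by rewrite -setI_eq0 setIid U0 orbT.
  by rewrite disjoint_sym disjoints1 negbK imset_f ?orbT.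
have OPT_dW : d%:R * W <= OPT c v.
  apply: OPT_singletons e_inj _ _ => j; first by rewrite !inE eqxx orbT.
  by rewrite /v (negbTE (single_neq j)).
have := approx kc bd (pos_profile_nonneg pos).
rewrite /mech_welfare acc big_seq1 y_eq A_U /bid_value /= /v eqxx mulr1.
exact: le_trans OPT_dW.
Qed.
End LowerBound.

Unset Implicit Arguments.
(* The theorem: otherwise M would be (1 - delta) d-approximate, and
   W := 1/(1 + delta) would give d/(1 + delta) <= (1 - delta) d. *)
Theorem theorem14 (m d : nat) (R : realFieldType) (delta : R)
  (M : prio_mech m R) :
  (2 <= d)%N -> (d <= m)%N -> 0 < delta ->
  priority_mechanism M -> feasible_output M -> truthful_verif M ->
  exists (n : nat) (coll : 'I_n -> {set {set 'I_m}}) (v : 'I_n -> {set 'I_m} -> R),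
    [/\ known_coll coll,
        (forall i S, S \in coll i -> (#|S| <= d)%N),
        nonneg_profile coll v
      & (1 - delta) * d%:R * mech_welfare M (bids_of coll v) < OPT coll v].
Proof.
move=> d2 dm delta0 prio feas truth; apply: NNPP => no_bad_instance.
set rho := (1 - delta) * d%:R.
have approx : approximates M d rho.
  move=> n coll v kc bd nn; rewrite leNgt; apply/negP => gap.
  by apply: no_bad_instance; exists n, coll, v.
have d_pos : 0 < d%:R :> R by rewrite ltr0n (ltn_trans _ d2).
have rho_lt : rho < d%:R by rewrite /rho; nra.
have delta1 : 0 < 1 + delta by lra.
have W0 : 0 < (1 + delta)^-1 by rewrite invr_gt0.
have W1 : (1 + delta)^-1 < 1 by rewrite invf_lt1 // ltrDl.
have := welfare_ratio_bound prio feas truth approx d2 dm rho_lt W0 W1.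
rewrite -[_ * _^-1]/(_ / _) ler_pdivrMr // /rho.
have := mulr_gt0 d_pos (mulr_gt0 delta0 delta0); nra.
Qed.
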